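(* $\mathfrak{ss}_{cc}\leq\mathfrak d$ and $\mathfrak b\leq\mathfrak{ss}_{cc}^\perp$.
   Context: Let $\mathfrak S$ be the set of all sequences $\mathbf a=\langle a_i:i\in\omega\rangle$ of rational numbers with $a_i\to 0$. Let $[\omega]^\omega_\omega$ denote the set of infinite coinfinite subsets of $\omega$. For infinite $X\subseteq\omega$ with increasing enumeration $\langle i_n\rangle$ write $\sum_X\mathbf a$ for $\sum_n a_{i_n}$. A series is convergent if its partial sums converge to a real number; it is conditional if $\sum_{\{i:a_i>0\}}\mathbf a=\infty$ and $\sum_{\{i:a_i<0\}}\mathbf a=-\infty$; conditionally convergent if both. Let $\mathfrak S_{cc}$ be the set of $\mathbf a\in\mathfrak S$ with $\sum\mathbf a$ conditionally convergent. $\mathfrak{ss}_{cc}$ is the least cardinality of a family $\mathcal X\subseteq[\omega]^\omega_\omega$ such that for every $\mathbf a\in\mathfrak S_{cc}$ there is $X\in\mathcal X$ with $\sum_X\mathbf a$ conditionally convergent; $\mathfrak{ss}_{cc}^\perp$ is the least cardinality of a family $\mathcal A\subseteq\mathfrak S_{cc}$ such that no $X\in[\omega]^\omega_\omega$ makes $\sum_X\mathbf a$ conditionally convergent for all $\mathbf a\in\mathcal A$. $\mathfrak b$ and $\mathfrak d$ are the bounding and dominating numbers. *)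

From HB Require Import structures.
From mathcomp Require Import all_boot all_order all_algebra.
From mathcomp Require Import all_classical all_reals all_analysis.
From mathcomp Require Import Rstruct Rstruct_topology.
Set Implicit Arguments. Unset Strict Implicit. Unset Printing Implicit Defensive.
Import Order.TTheory GRing.Theory Num.Theory.
Local Open Scope classical_set_scope.
Local Open Scope ring_scope.

Definition toR (a : nat -> rat) : nat -> Rdefinitions.R := fun n => ratr (a n).

Definition series_convergent (b : nat -> rat) : Prop :=
  cvgn (series (toR b)).

Definition series_conditional (b : nat -> rat) : Prop :=
  ((fun N : nat => \sum_(i < N | (0 < b i)%R) (toR b i)) @ \oo --> +oo)%classic
  /\ ((fun N : nat => \sum_(i < N | (b i < 0)%R) (toR b i)) @ \oo --> -oo)%classic.

Definition cond_convergent (b : nat -> rat) : Prop :=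
  series_convergent b /\ series_conditional b.

Definition in_S (a : nat -> rat) : Prop := (toR a @ \oo --> (0 : Rdefinitions.R))%classic.

Definition in_Scc (a : nat -> rat) : Prop := in_S a /\ cond_convergent a.

Definition inf_coinf (X : set nat) : Prop := infinite_set X /\ infinite_set (~` X).

(* sum_X a is conditionally convergent, where sum_X a = sum_n a_(i_n) for the
   increasing enumeration <i_n> of X. *)
Definition sub_cc (X : set nat) (a : nat -> rat) : Prop :=
  exists i : nat -> nat, (forall n m, (n < m)%N -> (i n < i m)%N) /\
    range i = X /\ cond_convergent (fun n => a (i n)).

Definition eventually_le (g f : nat -> nat) : Prop :=
  exists n0, forall n, (n0 <= n)%N -> (g n <= f n)%N.

Definition dominating (D : set (nat -> nat)) : Prop :=
  forall g, exists2 f, D f & eventually_le g f.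

Definition unbounded (B : set (nat -> nat)) : Prop :=
  forall g, exists2 f, B f & ~ eventually_le f g.

From mathcomp Require Import all_boot all_order all_algebra.
From mathcomp Require Import all_classical all_reals all_analysis.
From mathcomp Require Import Rstruct lra zify.
Import Order.TTheory GRing.Theory Num.Theory numFieldNormedType.Exports.
Local Open Scope classical_set_scope.
Local Open Scope ring_scope.

(* For f : nat -> nat, run through the naturals and skip the index following
   the current one as soon as it reaches f (k + 1), where k indices have been
   skipped so far; the retained set X_f is infinite and coinfinite. For a null
   sequence a, let h_a n be an index beyond which |a_j| <= 2^-n. If h_a <=* f,
   then for large k the (k + 1)-st skipped index j satisfies
   j >= f (k + 1) >= h_a (k + 1), so |a_j| <= 2^-(k + 1): the skipped terms form
   an absolutely convergent series. Hence the partial sums of a over X_f, and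
   those of its positive and negative parts, are partial sums over omega taken
   along a subsequence, minus a convergent sequence, and sum_(X_f) a is
   conditionally convergent. Thus {X_f : f in D} witnesses ss_cc for any
   dominating D, and if A witnesses ss_cc^perp then {h_a : a in A} is unbounded,
   since a bound g would make X_g work for every a in A. *)

Lemma unbounded_nat_infinite (A : set nat) :
  (forall N, exists2 n, (N <= n)%N & A n) -> infinite_set A.
Proof.
move=> unbA /finite_fsetP[X AX].
have [n ge_n An] := unbA (\max_(x <- finmap.enum_fset X) x).+1.
have Xn : n \in finmap.enum_fset X by move: An; rewrite AX.
by have := leq_trans ge_n (leq_bigmax_seq _ Xn isT); rewrite ltnn.
Qed.

Section Thinning.
Variable f : nat -> nat.

(* (i, c): the current retained index and the number of indices skipped so far. *)
Fixpoint thin_state (m : nat) : nat * nat :=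
  if m is m'.+1 then
    let: (i, c) := thin_state m' in
    if (f c.+1 <= i.+1)%N then (i.+2, c.+1) else (i.+1, c)
  else (0, 0)%N.

Definition thin_idx m := (thin_state m).1.
Definition thin_count m := (thin_state m).2.
Definition thin_skip m : bool := (f (thin_count m).+1 <= (thin_idx m).+1)%N.
Definition thin_set : set nat := range thin_idx.

Lemma thin_idxS m : thin_idx m.+1 = (thin_idx m + 1 + thin_skip m)%N.
Proof.
rewrite /thin_skip /thin_idx /thin_count /=.
by case: (thin_state m) => i c /=; case: ifP => skip /=; rewrite ?skip /=; lia.
Qed.

Lemma thin_countS m : thin_count m.+1 = (thin_count m + thin_skip m)%N.
Proof.
rewrite /thin_skip /thin_idx /thin_count /=.
by case: (thin_state m) => i c /=; case: ifP => skip /=; rewrite ?skip /=; lia.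
Qed.

Lemma thin_idx_increasing : {homo thin_idx : m n / (m < n)%N}.
Proof. by apply: homo_ltn => [y x z|m]; [exact: ltn_trans | rewrite thin_idxS; lia]. Qed.

Lemma thin_idx_nondecreasing : {homo thin_idx : m n / (m <= n)%N}.
Proof. exact/ltnW_homo/thin_idx_increasing. Qed.

Lemma thin_idx_ge m : (m <= thin_idx m)%N.
Proof. by elim: m => [|m IHm] //; rewrite thin_idxS; lia. Qed.

Lemma thin_count_nondecreasing : {homo thin_count : m n / (m <= n)%N}.
Proof. by apply: homo_leq => [//|y x z|m]; [exact: leq_trans | rewrite thin_countS; lia]. Qed.

Lemma thin_skip_infinitely_often N : exists2 m, (N <= m)%N & thin_skip m.
Proof.
apply: contrapT => no_skip.
have {}no_skip m : (N <= m)%N -> thin_skip m = false.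
  by move=> le_Nm; apply/negP => skm; apply: no_skip; exists m.
have count_const k : thin_count (N + k) = thin_count N.
  by elim: k => [|k IHk]; rewrite ?addn0 // addnS thin_countS IHk no_skip ?addn0 //; lia.
pose m := (N + f (thin_count N).+1)%N.
have := no_skip m (leq_addr _ _); rewrite /thin_skip count_const.
by have := thin_idx_ge m; case: leqP => //; lia.
Qed.

Lemma thin_count_unbounded k : exists M, (k <= thin_count M)%N.
Proof.
elim: k => [|k [M le_kM]]; first by exists 0%N.
have [m le_Mm skm] := thin_skip_infinitely_often M.
exists m.+1; rewrite thin_countS skm.
by have := thin_count_nondecreasing _ _ le_Mm; lia.
Qed.

Lemma thin_set_inf_coinf : inf_coinf thin_set.
Proof.
split; apply: unbounded_nat_infinite => N.
  by exists (thin_idx N); [exact: thin_idx_ge | exists N].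
have [m le_Nm skm] := thin_skip_infinitely_often N.
exists (thin_idx m).+1; first by have := thin_idx_ge m; lia.
move=> [k _ ikm]; case: (leqP k m) => [le_km|lt_mk].
  by have := thin_idx_nondecreasing _ _ le_km; rewrite ikm; lia.
by have := thin_idx_nondecreasing _ _ lt_mk; rewrite ikm thin_idxS skm; lia.
Qed.

Lemma thin_idx_cvg : thin_idx @ \oo --> \oo.
Proof.
move=> P [N _ NP]; exists N => // n /= le_Nn; apply: NP.
by have := thin_idx_ge n; rewrite /=; lia.
Qed.

Definition skipped_terms {V : zmodType} (w : V ^nat) m : V :=
  if thin_skip m then w (thin_idx m).+1 else 0.

Lemma series_thin_idx {V : zmodType} (w : V ^nat) M :
  series (w \o thin_idx) M = series w (thin_idx M) - series (skipped_terms w) M.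
Proof.
elim: M => [|M IHM]; first by rewrite /series /= !big_geq // subrr.
rewrite !seriesSr IHM thin_idxS addn1 {3}/skipped_terms.
case: (thin_skip M); rewrite ?addn1 ?addn0 !seriesSr ?addr0 addrAC //.
by rewrite opprD addrACA subrr addr0.
Qed.

End Thinning.

Section RealSeries.
Context {R : realType}.

Lemma cvg_series_telescoping_majorant (t g : R ^nat) M :
  (forall m, 0 <= g m) -> (forall m, (M <= m)%N -> `|t m| <= g m - g m.+1) ->
  cvgn (series t).
Proof.
move=> g_ge0 t_le.
pose nt := series (fun k => `|t k|).
have nd : nondecreasing_seq nt.
  by move=> m n; exact: (@nondecreasing_series _ (fun k => `|t k|) xpredT 0%N).
apply: normed_cvg; apply: nondecreasing_is_cvgn => //.
exists (nt M + g M) => _ [N _ <-] /=.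
apply: le_trans (nd N (N + M)%N (leq_addr _ _)) _.
rewrite /nt series_addn lerD2l.
apply: (@le_trans _ _ (\sum_(M <= m < N + M) (g m - g m.+1))).
  by apply: ler_sum_nat => m /andP[le_Mm _]; exact: t_le.
under eq_bigr do rewrite -opprB.
rewrite sumrN telescope_sumr ?leq_addl // opprB lerBlDr lerDl.
exact: g_ge0.
Qed.

Lemma cvgry_subr (u v : R ^nat) :
  u @ \oo --> +oo -> cvgn v -> (u - v) @ \oo --> +oo.
Proof.
move=> /cvgryPge uy /cvg_bounded/ex_bound[M vM]; apply/cvgryPge => A.
near=> n; rewrite !fctE.
have : A + M <= u n by near: n; exact: uy.
have : `|v n| <= M by near: n; exact: vM.
rewrite ler_norml => /andP[_ ?]; lra.
Unshelve. all: by end_near. Qed.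

Lemma cvgrNy_subr (u v : R ^nat) :
  u @ \oo --> -oo -> cvgn v -> (u - v) @ \oo --> -oo.
Proof.
move=> /cvgrNyPle uNy /cvg_bounded/ex_bound[M vM]; apply/cvgrNyPle => A.
near=> n; rewrite !fctE.
have : u n <= A - M by near: n; exact: uNy.
have : `|v n| <= M by near: n; exact: vM.
rewrite ler_norml => /andP[? _]; lra.
Unshelve. all: by end_near. Qed.

Definition null_modulus (u : R ^nat) (n : nat) : nat :=
  xget 0%N [set m | forall j, (m <= j)%N -> `|u j| <= 2^-1 ^+ n].

Lemma null_modulusP (u : R ^nat) n j :
  u @ \oo --> 0 -> (null_modulus u n <= j)%N -> `|u j| <= 2^-1 ^+ n.
Proof.
move=> u0; move: j.
suff: [set m | forall j, (m <= j)%N -> `|u j| <= 2^-1 ^+ n] (null_modulus u n) by [].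
apply: xgetPex.
have [|N _ uN] := cvgr_dist_le _ _ u0 (2^-1 ^+ n).
  by rewrite exprn_gt0 // invr_gt0.
by exists N => j /uN; rewrite sub0r normrN.
Qed.

End RealSeries.

Section ThinnedSeries.
Context {R : realType} (f : nat -> nat) (u : R ^nat).
Hypotheses (u0 : u @ \oo --> 0) (modulus_le_f : eventually_le (null_modulus u) f).

Lemma cvg_series_skipped_terms (w : R ^nat) :
  (forall j, `|w j| <= `|u j|) -> cvgn (series (skipped_terms f w)).
Proof.
move=> w_le; have [n0 le_n0] := modulus_le_f.
have [M le_n0M] := thin_count_unbounded f n0.
(* A skip at step m adds one to the count, and 2^-c - 2^-(c+1) = 2^-(c+1). *)
apply: (@cvg_series_telescoping_majorant _ _ (fun m => 2^-1 ^+ thin_count f m) M).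
  by move=> m; rewrite exprn_ge0 // invr_ge0.
move=> m le_Mm; rewrite thin_countS /skipped_terms.
case: ifP => [skm|_]; last by rewrite addn0 subrr normr0.
have -> : 2^-1 ^+ thin_count f m - 2^-1 ^+ (thin_count f m + true) =
          2^-1 ^+ (thin_count f m).+1 :> R by rewrite addn1 !exprS; lra.
apply: le_trans (w_le _) _; apply: null_modulusP => //.
have : (null_modulus u (thin_count f m).+1 <= f (thin_count f m).+1)%N.
  by apply: le_n0; have := thin_count_nondecreasing f _ _ le_Mm; lia.
by move: skm; rewrite /thin_skip; lia.
Qed.

Lemma thinned_series (w : R ^nat) : (forall j, `|w j| <= `|u j|) ->
  [/\ cvgn (series w) -> cvgn (series (w \o thin_idx f)),
      series w @ \oo --> +oo -> series (w \o thin_idx f) @ \oo --> +oo &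
      series w @ \oo --> -oo -> series (w \o thin_idx f) @ \oo --> -oo].
Proof.
move=> /cvg_series_skipped_terms cvg_skipped.
have -> : series (w \o thin_idx f) = series w \o thin_idx f - series (skipped_terms f w).
  by apply/funext => M; rewrite series_thin_idx.
split=> [cvg_w|wy|wNy].
- by apply: is_cvgB => //; apply: cvgP (cvg_comp _ _ (thin_idx_cvg f) cvg_w).
- exact: cvgry_subr (cvg_comp _ _ (thin_idx_cvg f) wy) cvg_skipped.
- exact: cvgrNy_subr (cvg_comp _ _ (thin_idx_cvg f) wNy) cvg_skipped.
Qed.

End ThinnedSeries.

Lemma sum_cond_series {V : zmodType} (u : V ^nat) (P : pred nat) :
  (fun N => \sum_(i < N | P i) u i) = series (fun i => if P i then u i else 0).
Proof. by apply/funext => N; rewrite seriesEord big_mkcond. Qed.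

Lemma sub_cc_thin_set (f : nat -> nat) (a : nat -> rat) :
  in_Scc a -> eventually_le (null_modulus (toR a)) f -> sub_cc (thin_set f) a.
Proof.
move=> [a0 [cvg_a [pos_a neg_a]]] le_f.
have restrict_le (P : pred nat) j :
    `|(if P j then toR a j else 0)| <= `|toR a j|.
  by case: (P j); rewrite ?normr0.
exists (thin_idx f); split; first exact: thin_idx_increasing.
have thin P := thinned_series f _ a0 le_f _ (restrict_le P).
split=> //; split; last split.
- by have [+ _ _] := thin xpredT; apply.
- move: pos_a; rewrite (sum_cond_series _ (fun i => 0 < a i)).
  rewrite (sum_cond_series _ (fun i => 0 < a (thin_idx f i))).
  by case: (thin (fun i => 0 < a i)).
- move: neg_a; rewrite (sum_cond_series _ (fun i => a i < 0)).
  rewrite (sum_cond_series _ (fun i => a (thin_idx f i) < 0)).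
  by case: (thin (fun i => a i < 0)).
Qed.

Theorem mainTheorem5 :
  (forall D : set (nat -> nat), dominating D ->
     exists F : (nat -> nat) -> set nat,
       (forall f, D f -> inf_coinf (F f)) /\
       (forall a, in_Scc a -> exists2 f, D f & sub_cc (F f) a))
  /\
  (forall A : set (nat -> rat), A `<=` in_Scc ->
     (forall X : set nat, inf_coinf X -> exists2 a, A a & ~ sub_cc X a) ->
     exists G : (nat -> rat) -> (nat -> nat), unbounded (G @` A)).
Proof.
split=> [D D_dom|A A_Scc A_perp].
- exists thin_set; split=> [f _|a a_Scc]; first exact: thin_set_inf_coinf.
  have [f Df le_f] := D_dom (null_modulus (toR a)).
  by exists f => //; exact: sub_cc_thin_set.
- exists (fun a => null_modulus (toR a)) => g; apply: contrapT => bounded_by_g.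
  have [a Aa] := A_perp _ (thin_set_inf_coinf g); apply.
  apply: sub_cc_thin_set; first exact: A_Scc.
  apply: contrapT => not_le; apply: bounded_by_g.
  by exists (null_modulus (toR a)) => //; exists a.
Qed.
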